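(* Let $f:\mathbb{N}^*\to\mathbb{N}^*$ and let $G$ be an $n$-vertex median graph in $\mathcal{U}_f$ with $f(n)\ge 2$. Then there exists a unique vertex $v_0$ of $G$ such that, for every $\Theta$-class $E_i$ of $G$, $v_0$ belongs to the majority halfspace of $E_i$ (the halfspace of strictly larger cardinality).
   Context: Graphs are finite, simple, connected and undirected; a graph is median if for every triple $x,y,z$ of vertices, $I(x,y)\cap I(y,z)\cap I(z,x)$ is a single vertex, where $I(u,v)=\{x: d(u,x)+d(x,v)=d(u,v)\}$. Two edges $uv$, $xy$ are in relation $\Theta_0$ if $u,v,y,x$ form a 4-cycle in which $uv$ and $xy$ are opposite; $\Theta$ is the reflexive–transitive closure of $\Theta_0$ and its classes are the $\Theta$-classes. In a median graph, deleting a $\Theta$-class $E_i$ leaves exactly two connected components with vertex sets $H_i',H_i''$ (the halfspaces). Given $f:\mathbb{N}^*\to\mathbb{N}^*$, a $\Theta$-class $E_i$ of a graph with $n$ vertices is $f$-balanced if $\min\{|H_i'|,|H_i''|\}\ge n/f(n)$, and $f$-unbalanced otherwise. $\mathcal{U}_f$ is the family of median graphs all of whose $\Theta$-classes are $f$-unbalanced. *)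

From mathcomp Require Import all_boot.
Set Implicit Arguments. Unset Strict Implicit. Unset Printing Implicit Defensive.

Section Graphs.
Variables (T : finType) (e : rel T).

Definition simple_graph := symmetric e /\ irreflexive e.
Definition connected_graph := forall x y : T, connect e x y.

Fixpoint walk_len (x y : T) (n : nat) : bool :=
  if n is n'.+1 then [exists z, e x z && walk_len z y n'] else x == y.

(* graph distance: least n with a walk of length n (distances in a connected
   graph are < #|T|; value #|T| if unreachable) *)
Definition dist (x y : T) : nat := find (walk_len x y) (iota 0 #|T|).

Definition interval (u v : T) : {set T} :=
  [set x | dist u x + dist x v == dist u v].

Definition median_graph :=
  forall x y z : T, #|interval x y :&: interval y z :&: interval z x| = 1.

Definition square (a b c d : T) : bool :=
  [&& e a b, e b c, e c d, e d a, a != c & b != d].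

(* Theta_0 on (oriented representatives of) edges: uv and xy are opposite
   edges of a 4-cycle u,v,y,x (in either orientation of xy) *)
Definition theta0 (p q : T * T) : bool :=
  square p.1 p.2 q.2 q.1 || square p.1 p.2 q.1 q.2.

(* Theta-class of the edge uv, as the set of ordered pairs (both
   orientations) of edges Theta-related to uv *)
Definition theta_class (u v : T) : {set T * T} :=
  [set p : T * T | e p.1 p.2 && (connect theta0 (u, v) p || connect theta0 (v, u) p)].

Definition del_edges (E : {set T * T}) : rel T :=
  fun x y => e x y && ((x, y) \notin E).

Definition comp (E : {set T * T}) (x : T) : {set T} :=
  [set z | connect (del_edges E) x z].

(* every Theta-class is f-unbalanced: for the two halfspaces H', H'' (the two
   components of G - E), min(|H'|,|H''|) < n / f n, i.e. min * f n < n *)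
Definition all_unbalanced (f : nat -> nat) :=
  forall u v : T, e u v ->
  forall a b : T, ~~ connect (del_edges (theta_class u v)) a b ->
    minn #|comp (theta_class u v) a| #|comp (theta_class u v) b| * f #|T| < #|T|.

Definition in_all_majority (v0 : T) :=
  forall u v : T, e u v ->
  forall a b : T, ~~ connect (del_edges (theta_class u v)) a b ->
    #|comp (theta_class u v) b| < #|comp (theta_class u v) a| ->
    v0 \in comp (theta_class u v) a.

End Graphs.

From Pilot Require Import Defs.
From mathcomp Require Import all_boot zify.
Set Implicit Arguments. Unset Strict Implicit. Unset Printing Implicit Defensive.

(* For an edge uv of a median graph let W(u,v) be the set of vertices closer to u than
   to v. Opposite edges of a 4-cycle have the same W-sets, because a median graph has
   no K_{2,3}; conversely every edge leaving W(u,v) is joined to uv by a ladder of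
   4-cycles built from medians. Hence the two halfspaces of the Theta-class of uv are
   W(u,v) and W(v,u), and they are convex. A vertex x minimising the total distance
   sum_w d(x,w) lies in every halfspace W with more than n/2 vertices: otherwise the
   first step from x towards its gate in W gets closer to every vertex of W, and the
   total distance drops. As f(n) >= 2, the two halfspaces of a Theta-class never have
   the same size, so each class has a strict majority side; two distinct vertices are
   separated by the class of the first edge of a geodesic between them, so at most one
   vertex lies on all majority sides. *)

Section MedianGraph.
Variables (T : finType) (e : rel T).
Hypotheses (e_sym : symmetric e) (e_irr : irreflexive e).
Hypotheses (e_conn : connected_graph e) (e_med : median_graph e).
Local Notation d := (dist e).
Local Notation walk := (walk_len e).

Lemma walk_cat x y z m n : walk x y m -> walk y z n -> walk x z (m + n).
Proof.
elim: m x => [|m IH] x; first by move=> /eqP->.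
case/existsP=> w /andP[xw wy] yz; apply/existsP; exists w; rewrite xw.
exact: IH.
Qed.

Lemma walk1 x y : walk x y 1 = e x y.
Proof.
apply/existsP/idP => [[z /andP[xz /eqP <-]] // | xy].
by exists y; rewrite xy eqxx.
Qed.

Lemma walk_sym x y n : walk x y n -> walk y x n.
Proof.
elim: n x => [|n IH] x; first by move=> /= /eqP->.
case/existsP=> z /andP[xz zy].
by rewrite -[n.+1]addn1; apply: walk_cat (IH _ zy) _; rewrite walk1 e_sym.
Qed.

Lemma walk_path x p : path e x p -> walk x (last x p) (size p).
Proof.
elim: p x => [|y p IH] x //= /andP[xy yp].
by apply/existsP; exists y; rewrite xy IH.
Qed.

Lemma walk_short x y : exists2 n, n < #|T| & walk x y n.
Proof.
have /connectP[p xp ->] := e_conn x y.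
have [q xq uq _] := shortenP xp.
exists (size q); last exact: walk_path.
by have := max_card (mem (x :: q)); rewrite (card_uniqP uq).
Qed.

Lemma has_walk_below_card x y : has (walk x y) (iota 0 #|T|).
Proof.
by have [n n_lt xy] := walk_short x y; apply/hasP; exists n; rewrite ?mem_iota.
Qed.

Lemma dist_lt_card x y : d x y < #|T|.
Proof. by rewrite /dist -[X in _ < X](size_iota 0) -has_find has_walk_below_card. Qed.

Lemma walk_dist x y : walk x y (d x y).
Proof. by have := nth_find 0 (has_walk_below_card x y); rewrite nth_iota ?dist_lt_card. Qed.

Lemma dist_min x y n : walk x y n -> d x y <= n.
Proof.
move=> xy; have [n_lt|] := ltnP n #|T|; last exact/leq_trans/ltnW/dist_lt_card.
rewrite leqNgt; apply/negP => /(before_find 0).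
by rewrite nth_iota // xy.
Qed.

Lemma dist_sym x y : d x y = d y x.
Proof. by apply/eqP; rewrite eqn_leq !dist_min // walk_sym // walk_dist. Qed.

Lemma dist_triangle x y z : d x z <= d x y + d y z.
Proof. exact/dist_min/walk_cat/walk_dist/walk_dist. Qed.

Lemma distxx x : d x x = 0.
Proof. by apply/eqP; rewrite -leqn0 (@dist_min x x 0 (eqxx x)). Qed.

Lemma dist_eq0 x y : d x y = 0 -> x = y.
Proof. by move=> xy0; have := walk_dist x y; rewrite xy0 /= => /eqP. Qed.

Lemma dist1_edge x y : d x y = 1 -> e x y.
Proof. by move=> xy1; have := walk_dist x y; rewrite xy1 walk1. Qed.

Lemma edge_dist1 x y : e x y -> d x y = 1.
Proof.
move=> xy; apply/eqP; rewrite eqn_leq dist_min ?walk1 // lt0n.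
by apply: contraTneq xy => /dist_eq0 ->; rewrite e_irr.
Qed.

Lemma dist_edge_le w x y : e x y -> d w y <= (d w x).+1.
Proof. by move=> xy; rewrite -addn1 -(edge_dist1 xy) dist_triangle. Qed.

Lemma geodesic_step x z : x != z -> exists2 y, e x y & (d y z).+1 = d x z.
Proof.
move=> xz; have := walk_dist x z; case xz_n: (d x z) => [|n].
  by move=> /eqP xz_eq; rewrite xz_eq eqxx in xz.
case/existsP=> y /andP[xy yz]; exists y => //.
have := dist_min yz; have := dist_triangle x y z; rewrite (edge_dist1 xy); lia.
Qed.

Definition is_median x y z m :=
  [/\ d x m + d m y = d x y, d y m + d m z = d y z & d z m + d m x = d z x].

Lemma median_exists x y z : exists m, is_median x y z m.
Proof.
have /cards1P[m Im] : #|interval e x y :&: interval e y z :&: interval e z x| == 1.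
  by rewrite e_med.
have : m \in [set m] by rewrite in_set1.
by rewrite -Im !inE => /andP[/andP[/eqP ? /eqP ?] /eqP ?]; exists m.
Qed.

Lemma median_unique x y z m1 m2 : is_median x y z m1 -> is_median x y z m2 -> m1 = m2.
Proof.
have /cards1P[m Im] : #|interval e x y :&: interval e y z :&: interval e z x| == 1.
  by rewrite e_med.
suff to_m k : is_median x y z k -> k = m by move=> /to_m -> /to_m.
by case=> xky ykz zkx; apply/set1P; rewrite -Im !inE xky ykz zkx !eqxx.
Qed.

(* Median graphs are bipartite: the median of [w], [x], [y] is one of the ends of the edge [xy]. *)
Lemma edge_dist w x y : e x y -> d w y = (d w x).+1 \/ d w x = (d w y).+1.
Proof.
move=> xy; have [m [wxm xym ywm]] := median_exists w x y.
rewrite (edge_dist1 xy) in xym.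
have := dist_sym w y; have := dist_sym w x; have := dist_sym x y.
rewrite (edge_dist1 xy).
have [/dist_eq0 mE | /dist_eq0 mE] : d x m = 0 \/ d m y = 0 by lia.
  by subst m; lia.
by subst m; lia.
Qed.

Lemma dist_common_neighbour x y z : e x y -> e y z -> x != z -> d x z = 2.
Proof.
move=> xy yz xz; have := dist_triangle x y z; rewrite (edge_dist1 xy) (edge_dist1 yz).
have xz0 : d x z <> 0 by move/dist_eq0=> xz_eq; rewrite xz_eq eqxx in xz.
have xz1 : d x z <> 1.
  have yx : e y x by rewrite e_sym.
  move=> /dist1_edge /(edge_dist y).
  by rewrite !edge_dist1 //; case.
lia.
Qed.

Lemma common_neighbour_median x y z w : e x y -> e y z -> x != z ->
  d w y < d w x -> d w y < d w z -> is_median x z w y.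
Proof.
move=> xy yz xz wyx wyz; have xz2 := dist_common_neighbour xy yz xz.
have [|wx] := edge_dist w xy; first lia.
have [wz|] := edge_dist w yz; last lia.
have := edge_dist1 xy; have := edge_dist1 yz; have := dist_sym y x; have := dist_sym z y.
have := dist_sym y w; have := dist_sym z w; split; lia.
Qed.

Lemma median_equidistant_dist2 x y v m : d x y = 2 -> d x v = d y v ->
  is_median x y v m -> [/\ e x m, e m y & (d m v).+1 = d x v].
Proof.
move=> xy2 xvy [xmy ymv vmx]; rewrite (dist_sym y m) in ymv.
rewrite (dist_sym v m) (dist_sym m x) (dist_sym v x) in vmx.
by split; [apply: dist1_edge | apply: dist1_edge |]; lia.
Qed.

Definition halfspace u v : {set T} := [set w | d w u < d w v].

Lemma halfspaceE u v w : e u v -> (w \in halfspace u v) = (d w v == (d w u).+1).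
Proof. by move=> uv; rewrite inE; case: (edge_dist w uv) => ->; rewrite ?eqxx ?ltnSn //; lia. Qed.

Lemma halfspaceC u v : e u v -> halfspace v u = ~: halfspace u v.
Proof.
by move=> uv; apply/setP => w; rewrite !inE; case: (edge_dist w uv) => ->; lia.
Qed.

Lemma card_halfspaceC u v : e u v -> #|halfspace u v| + #|halfspace v u| = #|T|.
Proof. by move=> uv; rewrite (halfspaceC uv) cardsC. Qed.

Lemma mem_halfspace_l u v : e u v -> u \in halfspace u v.
Proof. by move=> uv; rewrite inE distxx edge_dist1. Qed.

Lemma mem_halfspace_r u v : v \notin halfspace u v.
Proof. by rewrite inE distxx. Qed.

Lemma square_halfspace a b c q : square e a b c q -> halfspace a b \subset halfspace q c.
Proof.
case/and5P=> ab bc cq qa /andP[ac bq]; have qc : e q c by rewrite e_sym.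
apply/subsetP => w; rewrite !halfspaceE // => /eqP wab.
have [-> | wqc] := edge_dist w qc; first exact: eqxx.
have [wca wqa] : d w c = d w a /\ d w q = (d w a).+1.
  by have := edge_dist w qa; have := edge_dist w bc; lia.
(* Otherwise [a] and [c] would both be the median of [b], [q], [w]. *)
have ba : e b a by rewrite e_sym.
have aq : e a q by rewrite e_sym.
have med_a : is_median b q w a by apply: common_neighbour_median; rewrite ?wab ?wqa.
have med_c : is_median b q w c by apply: common_neighbour_median; rewrite ?wca ?wab ?wqa.
by rewrite (median_unique med_a med_c) eqxx in ac.
Qed.

Lemma square_rev a b c q : square e a b c q -> square e q c b a.
Proof.
case/and5P=> ab bc cq qa /andP[ac bq].
by rewrite /square e_sym cq e_sym bc e_sym ab e_sym qa eq_sym bq eq_sym ac.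
Qed.

Lemma square_halfspaceE a b c q : square e a b c q -> halfspace a b = halfspace q c.
Proof.
move=> abcq; apply/eqP; rewrite eqEsubset !square_halfspace //.
exact: square_rev.
Qed.

Lemma square_flip a b c q : square e a b c q -> square e b a q c.
Proof.
case/and5P=> ab bc cq qa /andP[ac bq].
by rewrite /square e_sym ab e_sym qa e_sym cq e_sym bc bq ac.
Qed.

Definition halfspace_pair (p : T * T) : {set {set T}} :=
  [set halfspace p.1 p.2; halfspace p.2 p.1].

Lemma theta0_halfspace_pair p q : theta0 e p q -> halfspace_pair q = halfspace_pair p.
Proof.
rewrite /halfspace_pair; case: p q => [p1 p2] [q1 q2].
case/orP=> sq; have /= := square_halfspaceE (square_flip sq).
  by rewrite (square_halfspaceE sq) => ->.
by rewrite (square_halfspaceE sq) => ->; apply: setUC.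
Qed.

Lemma connect_theta0_halfspace_pair p q :
  connect (theta0 e) p q -> halfspace_pair q = halfspace_pair p.
Proof.
case/connectP=> s; elim: s p => [|r s IH] p /=; first by move=> _ ->.
by case/andP=> pr rs qs; rewrite (IH r rs qs) (theta0_halfspace_pair pr).
Qed.

Lemma theta_class_halfspace u v p :
  p \in theta_class e u v -> halfspace p.1 p.2 \in halfspace_pair (u, v).
Proof.
have pair_sym : halfspace_pair (v, u) = halfspace_pair (u, v) by rewrite /halfspace_pair setUC.
rewrite inE => /andP[_ /orP[] /connect_theta0_halfspace_pair];
  rewrite ?pair_sym => <-; exact: set21.
Qed.

Lemma theta_class_crossing u v p : e u v -> p \in theta_class e u v ->
  (p.1 \in halfspace u v) != (p.2 \in halfspace u v).
Proof.
move=> uv p_uv; move: (p_uv); rewrite inE => /andP[p12 _].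
have := mem_halfspace_l p12; have := mem_halfspace_r p.1 p.2.
case/set2P: (theta_class_halfspace p_uv) => [-> | ->]; first by move=> /negbTE-> ->.
by rewrite (halfspaceC uv) !in_setC negbK => -> /negbTE->.
Qed.

Lemma halfspace_step_in u v x y : e u v -> e x y -> x \in halfspace u v ->
  d y u < d x u -> y \in halfspace u v.
Proof.
move=> uv xy; rewrite !inE => xuv yxu.
have yx : e y x by rewrite e_sym.
by have := dist_edge_le v yx; rewrite dist_sym (dist_sym v y); lia.
Qed.

Lemma crossing_edge_dist u v x y : e u v -> e x y ->
  x \in halfspace u v -> y \notin halfspace u v -> d y u = (d x u).+1 /\ d y v = d x u.
Proof.
move=> uv xy; have vu : e v u by rewrite e_sym.
rewrite -in_setC -(halfspaceC uv) !halfspaceE // => /eqP xvu /eqP yuv.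
have := edge_dist u xy; have := edge_dist v xy.
by rewrite !(dist_sym u) !(dist_sym v); lia.
Qed.

Lemma crossing_edge_theta0_step u v x y : e u v -> e x y ->
  x \in halfspace u v -> y \notin halfspace u v -> x != u ->
  exists x' y', [/\ e x' y', x' \in halfspace u v, y' \notin halfspace u v,
    d x' u < d x u & theta0 e (x', y') (x, y)].
Proof.
move=> uv xy xW yW xu; have [yu yv] := crossing_edge_dist uv xy xW yW.
have [x' xx' x'u] := geodesic_step xu.
have x'x : e x' x by rewrite e_sym.
have x'W : x' \in halfspace u v by apply: (halfspace_step_in uv xx' xW); rewrite -x'u.
have x'_neq_y : x' != y by apply: contraNneq yW => <-.
have x'v : d x' v = (d x' u).+1 by apply/eqP; rewrite -halfspaceE.
(* The median [m] of [x'], [y], [v] closes the 4-cycle [x' m y x] one step nearer to [u]. *)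
have [m med] := median_exists x' y v.
have x'y_v : d x' v = d y v by rewrite x'v yv x'u.
have [x'm my mv] := median_equidistant_dist2 (dist_common_neighbour x'x xy x'_neq_y) x'y_v med.
have mW : m \notin halfspace u v.
  have mv' : d m v = d x' u by apply/eqP; rewrite -eqSS mv x'v.
  rewrite inE -leqNgt mv'; have := dist_triangle y m u.
  by rewrite (dist_sym y m) (edge_dist1 my) yu -x'u add1n ltnS => /ltnW.
have mx : m != x by apply: contraNneq mW => ->.
exists x', m; split; rewrite -?x'u //.
by rewrite /theta0 /square /= x'm my e_sym xy xx' x'_neq_y mx.
Qed.

Lemma crossing_edge_theta u v x y : e u v -> e x y ->
  x \in halfspace u v -> y \notin halfspace u v -> connect (theta0 e) (u, v) (x, y).
Proof.
move=> uv; have [n] := ubnP (d x u); elim: n x y => // n IH x y xn xy xW yW.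
have [xu | xu] := eqVneq x u.
  have [_] := crossing_edge_dist uv xy xW yW; rewrite xu distxx => /dist_eq0 ->.
  exact: connect0.
have [x' [y' [x'y' x'W y'W x'x step]]] := crossing_edge_theta0_step uv xy xW yW xu.
apply: connect_trans (IH x' y' _ x'y' x'W y'W) (connect1 step); lia.
Qed.

Lemma crossing_edge_in_theta_class u v x y : e u v -> e x y ->
  (x \in halfspace u v) != (y \in halfspace u v) -> (x, y) \in theta_class e u v.
Proof.
move=> uv xy; rewrite [_ \in theta_class _ _ _]inE /= xy /=.
case xW: (x \in halfspace u v); case yW: (y \in halfspace u v) => // _.
  by rewrite (crossing_edge_theta uv xy) // yW.
have vu : e v u by rewrite e_sym.
have xWvu : x \in halfspace v u by rewrite (halfspaceC uv) in_setC xW.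
have yWvu : y \notin halfspace v u by rewrite (halfspaceC uv) in_setC yW.
by rewrite (crossing_edge_theta vu xy xWvu yWvu) orbT.
Qed.

Lemma halfspace_crossing_edge u v x y : e u v -> e x y ->
  x \in halfspace u v -> y \notin halfspace u v -> halfspace x y = halfspace u v.
Proof.
move=> uv xy xW yW; have xy_uv : (x, y) \in theta_class e u v.
  by apply: crossing_edge_in_theta_class; rewrite // xW (negbTE yW).
case/set2P: (theta_class_halfspace xy_uv) => //= xy_vu.
by have := mem_halfspace_l xy; rewrite xy_vu (halfspaceC uv) in_setC xW.
Qed.

Lemma theta_classC u v : theta_class e v u = theta_class e u v.
Proof. by apply/setP => p; rewrite !inE orbC. Qed.

Lemma del_theta_class u v x y : e u v ->
  del_edges e (theta_class e u v) x y =
    e x y && ((x \in halfspace u v) == (y \in halfspace u v)).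
Proof.
move=> uv; rewrite /del_edges; case xy: (e x y) => //=.
apply/idP/idP => [|/eqP xyW]; first by apply: contraR => /(crossing_edge_in_theta_class uv xy).
by apply/negP => /(theta_class_crossing uv) /=; rewrite xyW eqxx.
Qed.

Lemma connect_del_theta_class_l u v z : e u v -> z \in halfspace u v ->
  connect (del_edges e (theta_class e u v)) z u.
Proof.
move=> uv; have [n] := ubnP (d z u); elim: n z => // n IH z zn zW.
have [-> | zu] := eqVneq z u; first exact: connect0.
have [z' zz' z'u] := geodesic_step zu.
have z'W : z' \in halfspace u v by apply: (halfspace_step_in uv zz' zW); rewrite -z'u.
apply: connect_trans (connect1 _) (IH z' _ z'W); last by lia.
by rewrite del_theta_class // zz' zW z'W.
Qed.

Lemma connect_del_theta_class u v a b : e u v ->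
  connect (del_edges e (theta_class e u v)) a b =
    ((a \in halfspace u v) == (b \in halfspace u v)).
Proof.
move=> uv; apply/idP/eqP => [|abW].
  by apply: closed_connect => x y; rewrite del_theta_class // => /andP[_ /eqP].
wlog aW : u v uv abW / a \in halfspace u v.
  move=> gen; have [|aW] := boolP (a \in halfspace u v); first exact: gen.
  have vu : e v u by rewrite e_sym.
  by rewrite -theta_classC; apply: gen => //; rewrite (halfspaceC uv) !in_setC // abW.
have r_sym : connect_sym (del_edges e (theta_class e u v)).
  by apply: sym_connect_sym => x y; rewrite !del_theta_class // e_sym eq_sym.
rewrite (same_connect r_sym (connect_del_theta_class_l uv aW)) r_sym.
by apply: (connect_del_theta_class_l uv); rewrite -abW.
Qed.

Lemma comp_theta_class u v a : e u v ->
  Defs.comp e (theta_class e u v) a =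
    if a \in halfspace u v then halfspace u v else halfspace v u.
Proof.
move=> uv; apply/setP => z; rewrite [LHS]inE connect_del_theta_class //.
by rewrite (halfspaceC uv); case: (a \in _); rewrite ?in_setC; case: (z \in _).
Qed.

Lemma theta_class_halfspaces u v : e u v ->
  [/\ ~~ connect (del_edges e (theta_class e u v)) u v,
      Defs.comp e (theta_class e u v) u = halfspace u v &
      Defs.comp e (theta_class e u v) v = halfspace v u].
Proof.
move=> uv; have uW := mem_halfspace_l uv; have /negbTE vW := mem_halfspace_r u v.
by rewrite connect_del_theta_class // !comp_theta_class // uW vW.
Qed.

Lemma halfspace_convex u v x y z : e u v -> x \in halfspace u v -> y \in halfspace u v ->
  d x z + d z y = d x y -> z \in halfspace u v.
Proof.
move=> uv; have [n] := ubnP (d x y); elim: n x => // n IH x xyn xW yW xzy.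
have [<- // | xz] := eqVneq x z.
have [x1 xx1 x1z] := geodesic_step xz.
have x1y : d x1 y = (d x y).-1.
  by have := dist_triangle x1 z y; have := dist_triangle x x1 y; rewrite (edge_dist1 xx1); lia.
have [x1W | x1W] := boolP (x1 \in halfspace u v).
  by apply: (IH x1) => //; lia.
have := halfspace_crossing_edge uv xx1 xW x1W; move/setP/(_ y); rewrite yW inE.
by rewrite (dist_sym y) (dist_sym y x1); lia.
Qed.

Lemma halfspace_gate u v x g w : e u v -> g \in halfspace u v ->
  (forall h, h \in halfspace u v -> d x g <= d x h) -> w \in halfspace u v ->
  d x w = d x g + d g w.
Proof.
move=> uv gW g_min wW; have [m [xmg gmw wmx]] := median_exists x g w.
have mW : m \in halfspace u v := halfspace_convex uv gW wW gmw.
have /dist_eq0 mg : d m g = 0 by have := g_min m mW; lia.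
by move: wmx; rewrite mg !(dist_sym w) (dist_sym g x); lia.
Qed.

Definition total_dist x := \sum_w d x w.

Lemma total_dist_edge x y : e x y ->
  total_dist y + #|halfspace y x| = total_dist x + #|halfspace x y|.
Proof.
have card_sum (A : {set T}) : #|A| = \sum_w (w \in A : nat).
  by rewrite -sum1_card big_mkcond; apply: eq_bigr => w _; case: (w \in A).
move=> xy; rewrite /total_dist !card_sum -!big_split; apply: eq_bigr => w _ /=.
have := dist_sym x w; have := dist_sym y w; have := edge_dist w xy.
by rewrite !inE; case: ltngtP; lia.
Qed.

Lemma total_dist_min_halfspace u v x : e u v ->
  (forall y, total_dist x <= total_dist y) -> #|T| < 2 * #|halfspace u v| ->
  x \in halfspace u v.
Proof.
move=> uv x_min W_big; apply/negPn/negP => xW.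
have [g gW g_min] := arg_minnP (d x) (mem_halfspace_l uv).
have xg : x != g by apply: contraNneq xW => ->.
have [x' xx' x'g] := geodesic_step xg.
have W_sub : halfspace u v \subset halfspace x' x.
  apply/subsetP => w wW; rewrite inE.
  have := halfspace_gate uv gW g_min wW; have := dist_triangle w g x'.
  by have := dist_sym w g; have := dist_sym g x'; have := dist_sym w x; lia.
have := subset_leq_card W_sub; have := card_halfspaceC xx'.
by have := total_dist_edge xx'; have := x_min x'; lia.
Qed.

Lemma in_all_majorityP x : in_all_majority e x <->
  forall u v, e u v -> #|halfspace v u| < #|halfspace u v| -> x \in halfspace u v.
Proof.
split=> [x_maj u v uv | x_maj u v uv a b].
  by have [sep <- <-] := theta_class_halfspaces uv; apply: x_maj.
have vu : e v u by rewrite e_sym.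
rewrite connect_del_theta_class // !comp_theta_class //.
by case: (a \in _); case: (b \in _) => // _; [apply: x_maj uv | apply: x_maj vu].
Qed.

Lemma all_unbalanced_card_halfspace f u v : all_unbalanced e f -> 1 < f #|T| ->
  e u v -> #|halfspace u v| != #|halfspace v u|.
Proof.
move=> unbal f_ge2 uv; have [sep Cu Cv] := theta_class_halfspaces uv.
have := unbal u v uv u v sep; rewrite Cu Cv => lt.
apply/eqP => eq_card; have := card_halfspaceC uv.
by rewrite eq_card minnn in lt *; nia.
Qed.

Lemma total_dist_min_in_all_majority x :
  (forall y, total_dist x <= total_dist y) -> in_all_majority e x.
Proof.
move=> x_min; apply/in_all_majorityP => u v uv lt.
by apply: total_dist_min_halfspace x_min _; have := card_halfspaceC uv; lia.
Qed.

Lemma in_all_majority_unique f x y : all_unbalanced e f -> 1 < f #|T| ->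
  in_all_majority e x -> in_all_majority e y -> x = y.
Proof.
move=> unbal f_ge2 /in_all_majorityP x_maj /in_all_majorityP y_maj.
apply/eqP/negPn/negP => xy; have [x' xx' x'y] := geodesic_step xy.
have x'x : e x' x by rewrite e_sym.
have := all_unbalanced_card_halfspace unbal f_ge2 xx'; rewrite neq_ltn => /orP[lt | lt].
- by have := x_maj x' x x'x lt; rewrite inE distxx.
- by have := y_maj x x' xx' lt; rewrite inE (dist_sym y) (dist_sym y x'); lia.
Qed.

End MedianGraph.

Theorem mainTheorem5 (f : nat -> nat) (T : finType) (e : rel T) :
  (forall n, 0 < n -> 0 < f n) ->
  simple_graph e -> connected_graph e -> 0 < #|T| ->
  median_graph e -> all_unbalanced e f ->
  2 <= f #|T| ->
  exists! v0 : T, in_all_majority e v0.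
Proof.
move=> _ [e_sym e_irr] e_conn /card_gt0P[x0 _] e_med unbal f_ge2.
have [x _ x_min] := arg_minnP (total_dist e) (isT : xpredT x0).
have x_maj : in_all_majority e x.
  by apply: total_dist_min_in_all_majority => // y; apply: x_min.
exists x; split=> // y y_maj.
exact: in_all_majority_unique unbal f_ge2 x_maj y_maj.
Qed.
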